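(* Let $k$ be a field of characteristic zero, $S=k[x_1,x_2,x_3]$, and $(S,L)$ a triangularizable Lie–Rinehart algebra with basis $\alpha_1,\alpha_2,\alpha_3$ satisfying the Bézout condition, with enveloping algebra $U$. Let $\{f_l^i:i\in\{1,2\},l\in\{1,2,3\}\}\subset S$ and $\omega=\sum_{l=1}^3(f_l^2\alpha_2+f_l^1\alpha_1)\hat x_l\in\mathcal{X}^1$. If $\omega$ is a cocycle, then there exist unique $g_{11},g_{12},g_{22}\in S$ with $g_{11}\alpha_1(x_1)=f_1^1$, $g_{12}\alpha_1(x_1)=f_1^2$ and $g_{22}\alpha_2(x_2)=f_2^2-g_{12}\alpha_1(x_2)$, and these satisfy $$\omega\equiv d^0\big(\tfrac12g_{11}\alpha_1^2+g_{12}\alpha_2\alpha_1+\tfrac12g_{22}\alpha_2^2\big)\pmod{F_0\mathcal{X}^1}.$$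
   Context: Triangularizable: $L\subseteq\operatorname{Der}(S)$ an $S$-submodule and Lie subalgebra, free with basis of derivations $\alpha_1,\alpha_2,\alpha_3$, $\alpha_i(x_j)=0$ for $i>j$, $\alpha_1(x_1)\alpha_2(x_2)\alpha_3(x_3)\ne0$. Bézout: $\alpha_2(x_2),\alpha_2(x_3)$ coprime and $\alpha_1(x_1)$ coprime with $\alpha_1(x_2)\alpha_2(x_3)-\alpha_2(x_2)\alpha_1(x_3)$. In $U$, $[\alpha,s]=\alpha(s)$ for $\alpha\in L,s\in S$. $\mathcal{X}^q=U\otimes_k\operatorname{Hom}_k(\Lambda^qW,k)$ with $W=\operatorname{span}(x_1,x_2,x_3)$ and dual basis $\hat x_l$; $d^0(u)=\sum_k[u,x_k]\hat x_k$ and $d^1(\sum_ku_k\hat x_k)=\sum_{k<l}([u_k,x_l]-[u_l,x_k])\hat x_k\wedge\hat x_l$; $\omega$ is a cocycle if $d^1\omega=0$. $F_0\mathcal{X}^1=S\hat x_1\oplus S\hat x_2\oplus S\hat x_3$. *)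

From HB Require Import structures.
From mathcomp Require Import all_boot all_order all_algebra.
From mathcomp Require Import mpoly.
Set Implicit Arguments. Unset Strict Implicit. Unset Printing Implicit Defensive.
Import GRing.Theory.
Local Open Scope ring_scope.

(* S = k[x_1,x_2,x_3] is {mpoly k[3]}; x_{j+1} is 'X_j for j : 'I_3 (0-indexed). *)

Definition is_kder (k : fieldType) (D : {mpoly k[3]} -> {mpoly k[3]}) : Prop :=
  [/\ forall p q, D (p + q) = D p + D q,
      forall (c : k) p, D (c *: p) = c *: D p
    & forall p q, D (p * q) = D p * q + p * D q].

Definition sdiv (k : fieldType) (d p : {mpoly k[3]}) : Prop := exists q, p = q * d.
Definition sunit (k : fieldType) (d : {mpoly k[3]}) : Prop := exists e, d * e = 1.
Definition scoprime (k : fieldType) (p q : {mpoly k[3]}) : Prop :=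
  forall d, sdiv d p -> sdiv d q -> sunit d.

Definition comm (U : nzRingType) (u v : U) : U := u * v - v * u.

(* X^q for q = 0,1,2 as functions on ordered index tuples; W = span(x_1,x_2,x_3) *)
Definition d0 (k : fieldType) (U : nzRingType) (iota : {mpoly k[3]} -> U) (u : U)
  : 'I_3 -> U := fun l => comm u (iota 'X_l).

Definition d1 (k : fieldType) (U : nzRingType) (iota : {mpoly k[3]} -> U)
  (w : 'I_3 -> U) : 'I_3 -> 'I_3 -> U :=
  fun i j => comm (w i) (iota 'X_j) - comm (w j) (iota 'X_i).

Definition cocycle1 (k : fieldType) (U : nzRingType) (iota : {mpoly k[3]} -> U)
  (w : 'I_3 -> U) : Prop := forall i j : 'I_3, (i < j)%N -> d1 iota w i j = 0.

Definition inF0 (k : fieldType) (U : nzRingType) (iota : {mpoly k[3]} -> U)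
  (w : 'I_3 -> U) : Prop := forall l : 'I_3, exists s, w l = iota s.

From HB Require Import structures.
From mathcomp Require Import all_boot all_order all_algebra.
From mathcomp Require Import mpoly.
From mathcomp Require Import zify ring.
From Stdlib Require Import Classical.
Import GRing.Theory.
Local Open Scope ring_scope.

(* The cocycle condition on omega only involves the brackets
   [alpha_i, x_l] = alpha_i(x_l), so it amounts to the polynomial identities
     f^2_i alpha_2(x_j) + f^1_i alpha_1(x_j) = f^2_j alpha_2(x_i) + f^1_j alpha_1(x_i)
   for i < j. As alpha_2(x_1) = 0, the Bezout conditions and Euclid's lemma in the
   factorial ring k[x_1,x_2,x_3] solve them as
     f^1 = g11 alpha_1(x) + g12 alpha_2(x),   f^2 = g12 alpha_1(x) + g22 alpha_2(x)
   with a symmetric matrix (g_ij), and the bracket of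
   1/2 g11 alpha_1^2 + g12 alpha_2 alpha_1 + 1/2 g22 alpha_2^2 with x_l has exactly
   these coefficients on alpha_1 and alpha_2, up to a term in S. Factoriality of
   k[x_1, ..., x_n] follows from Gauss' lemma by induction on n. *)

Set Implicit Arguments. Unset Strict Implicit. Unset Printing Implicit Defensive.

Section Divisibility.
Variable R : idomainType.

Definition dvdr (a b : R) : Prop := exists q, b = q * a.
Definition coprimer (a b : R) : Prop :=
  forall d, dvdr d a -> dvdr d b -> d \is a GRing.unit.
Definition irreducibler (p : R) : Prop := [/\ p != 0, p \isn't a GRing.unit &
  forall a b, p = a * b -> a \is a GRing.unit \/ b \is a GRing.unit].
Definition primer (p : R) : Prop :=
  forall a b, dvdr p (a * b) -> dvdr p a \/ dvdr p b.

Definition unit_measure (mu : R -> nat) : Prop :=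
  (forall a b, a != 0 -> b != 0 -> mu (a * b) = (mu a + mu b)%N) /\
  (forall a, a != 0 -> (mu a == 0%N) = (a \is a GRing.unit)).
(* A [unit_measure] makes the ring atomic, so [factorial_domain] means UFD. *)
Definition factorial_domain : Prop :=
  exists mu, unit_measure mu /\ forall p, irreducibler p -> primer p.

Lemma dvdrr a : dvdr a a. Proof. by exists 1; rewrite mul1r. Qed.
Lemma dvdr0 a : dvdr a 0. Proof. by exists 0; rewrite mul0r. Qed.
Lemma dvdr_trans a b c : dvdr a b -> dvdr b c -> dvdr a c.
Proof. by move=> [q ->] [r ->]; exists (r * q); rewrite mulrA. Qed.
Lemma dvdr_mull a b c : dvdr a b -> dvdr a (c * b).
Proof. by move=> [q ->]; exists (c * q); rewrite mulrA. Qed.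
Lemma dvdr_mulr a b c : dvdr a b -> dvdr a (b * c).
Proof. by rewrite mulrC; apply: dvdr_mull. Qed.
Lemma dvdrD a b c : dvdr a b -> dvdr a c -> dvdr a (b + c).
Proof. by move=> [q ->] [r ->]; exists (q + r); rewrite mulrDl. Qed.
Lemma dvdrB a b c : dvdr a b -> dvdr a c -> dvdr a (b - c).
Proof. by move=> [q ->] [r ->]; exists (q - r); rewrite mulrBl. Qed.
Lemma unit_dvdr u x : u \is a GRing.unit -> dvdr u x.
Proof. by move=> Uu; exists (x / u); rewrite divrK. Qed.

Lemma mulr_neq0_l (a b : R) : a * b != 0 -> a != 0.
Proof. by apply: contraNneq => ->; rewrite mul0r. Qed.
Lemma mulr_neq0_r (a b : R) : a * b != 0 -> b != 0.
Proof. by apply: contraNneq => ->; rewrite mulr0. Qed.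

Section Measure.
Variable mu : R -> nat.
Hypothesis mu_measure : unit_measure mu.

Lemma measure_gt0 a : a != 0 -> a \isn't a GRing.unit -> (0 < mu a)%N.
Proof. by move=> a0 aU; rewrite lt0n (proj2 mu_measure a a0). Qed.

Lemma measureM a b : a != 0 -> b != 0 -> mu (a * b) = (mu a + mu b)%N.
Proof. exact: (proj1 mu_measure). Qed.

Lemma dvdr_irreducible a : a != 0 -> a \isn't a GRing.unit ->
  exists2 p, irreducibler p & dvdr p a.
Proof.
have [N] := ubnP (mu a); elim: N a => // N IH a lt_aN a0 aU.
have [irr_a | red_a] := classic (irreducibler a); first by exists a; last exact: dvdrr.
have [b [c [def_a bU cU]]] : exists b c,
    [/\ a = b * c, b \isn't a GRing.unit & c \isn't a GRing.unit].
  apply: NNPP => nfact; apply: red_a; split=> // b c def_a.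
  by apply: NNPP => /not_or_and[/negP bU /negP cU]; apply: nfact; exists b, c.
have b0 : b != 0 by apply: (@mulr_neq0_l b c); rewrite -def_a.
have c0 : c != 0 by apply: (@mulr_neq0_r b c); rewrite -def_a.
have lt_bN : (mu b < N)%N.
  by move: lt_aN (measure_gt0 c0 cU); rewrite def_a measureM //; lia.
by have [p irr_p /(dvdr_mulr c) p_a] := IH b lt_bN b0 bU; exists p => //; rewrite def_a.
Qed.

Hypothesis irreducible_prime : forall p, irreducibler p -> primer p.

Lemma coprimer_dvdr_mul a b x : coprimer a b -> dvdr a (x * b) -> dvdr a x.
Proof.
have [-> cop0b [q]|a0] := eqVneq a 0.
  rewrite mulr0 => /eqP; rewrite mulf_eq0 => /orP[/eqP->|/eqP b0]; first exact: dvdr0.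
  by have := cop0b 0 (dvdrr _); rewrite b0 unitr0 => /(_ (dvdrr _)).
have [N] := ubnP (mu a); elim: N a a0 x => // N IH a a0 x lt_aN cop_ab ab_x.
have [aU|aU] := boolP (a \is a GRing.unit); first exact: unit_dvdr.
have [p [p0 pU p_irr] [a' def_a]] := dvdr_irreducible a0 aU.
have p_a : dvdr p a by exists a'.
have [[x' def_x]|p_b] := irreducible_prime (And3 p0 pU p_irr) (dvdr_trans p_a ab_x).
  have a'0 : a' != 0 by apply: (@mulr_neq0_l a' p); rewrite -def_a.
  have cop_a'b : coprimer a' b.
    by move=> d d_a' d_b; apply: cop_ab d_b; apply: dvdr_trans d_a' _; exists p; rewrite mulrC.
  have a'b_x' : dvdr a' (x' * b).
    case: ab_x => q; rewrite def_x def_a -mulrA [p * b]mulrC !mulrA => /(mulIf p0) ->.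
    by exists q.
  have lt_a'N : (mu a' < N)%N.
    by move: lt_aN (measure_gt0 p0 pU); rewrite def_a measureM //; lia.
  have [y def_x'] := IH a' a'0 x' lt_a'N cop_a'b a'b_x'.
  by exists y; rewrite def_x def_x' def_a mulrA.
by have := cop_ab p p_a p_b; rewrite (negbTE pU).
Qed.

End Measure.

Lemma factorial_coprimer_dvdr_mul a b x :
  factorial_domain -> coprimer a b -> dvdr a (x * b) -> dvdr a x.
Proof.
by move=> [mu [mu_measure irr_prime]]; apply: (coprimer_dvdr_mul mu_measure irr_prime).
Qed.

End Divisibility.

Section PolyFactorial.
Variable R : idomainType.
Implicit Types (a c d p : R) (f g h s : {poly R}).

Lemma dvdr_polyCP c f : dvdr c%:P f <-> forall i, dvdr c f`_i.
Proof.
split=> [[q ->] i|]; first by rewrite coefMC; exists q`_i.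
elim/poly_ind: f => [|f a IHf] c_f; first exact: dvdr0.
have [|q ->] := IHf.
  by move=> i; have := c_f i.+1; rewrite coefD coefMX coefC /= addr0.
have [r ->] : dvdr c a by have := c_f 0%N; rewrite coefD coefMX coefC /= add0r.
by exists (q * 'X + r%:P); rewrite polyCM mulrDl mulrAC.
Qed.

Lemma polyC_unit c : (c%:P \is a GRing.unit) = (c \is a GRing.unit).
Proof.
rewrite poly_unitE size_polyC coefC /=.
by have [->|c0] := eqVneq c 0; rewrite ?unitr0 ?andbF.
Qed.

Lemma primer_polyC p : primer p -> primer p%:P.
Proof.
move=> p_prime f g; have [N] := ubnP (size f + size g).
elim: N f g => // N IH f g lt_fgN pC_fg.
have [->|f0] := eqVneq f 0; first by left; exact: dvdr0.
have [->|g0] := eqVneq g 0; first by right; exact: dvdr0.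
wlog p_f0 : f g lt_fgN pC_fg f0 g0 / dvdr p f`_0.
  move=> W; have := (dvdr_polyCP _ _).1 pC_fg 0%N; rewrite coef0M => /p_prime[].
    exact: W.
  rewrite addnC mulrC in lt_fgN pC_fg.
  by move/(W g f lt_fgN pC_fg g0 f0); case; [right | left].
set f' := drop_poly 1 f.
have def_f : f = (f`_0)%:P + f' * 'X.
  rewrite -{1}(poly_take_drop 1 f) expr1; congr (_ + _).
  by apply/polyP => i; rewrite coef_take_poly coefC; case: i.
have pC_f'g : dvdr p%:P (f' * g).
  have f'gX : f' * g * 'X = f * g - (f`_0)%:P * g.
    by rewrite [in f * g]def_f mulrDl addrC addKr mulrAC.
  apply/dvdr_polyCP => i; have -> : (f' * g)`_i = (f' * g * 'X)`_i.+1 by rewrite coefMX.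
  rewrite f'gX coefB coefCM.
  by apply: dvdrB; [exact: (dvdr_polyCP _ _).1 | exact: dvdr_mulr].
have lt_f'gN : (size f' + size g < N)%N.
  by move: lt_fgN f0; rewrite /f' size_drop_poly -size_poly_gt0; lia.
have [pC_f'|] := IH f' g lt_f'gN pC_f'g; last by right.
left; rewrite def_f; apply: dvdrD; last exact: dvdr_mulr.
by case: p_f0 => q ->; exists q%:P; rewrite polyCM.
Qed.

Definition primitive f : Prop :=
  forall d, (forall i, dvdr d f`_i) -> d \is a GRing.unit.

Lemma irreducible_polyC c : irreducibler c%:P -> irreducibler c.
Proof.
move=> [c0 cU c_irr]; split; first by rewrite -polyC_eq0.
  by rewrite -polyC_unit.
by move=> a b def_c; rewrite -!polyC_unit; apply: c_irr; rewrite def_c polyCM.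
Qed.

Lemma dvdr_modp_mul (d : {poly R}) f g h :
  dvdr d (f * h) -> dvdr d (g * h) -> dvdr d (f %% g * h).
Proof.
have -> : f %% g = (lead_coef g ^+ scalp f g) *: f - f %/ g * g.
  by rewrite Pdiv.Idomain.divp_eq addrAC subrr add0r.
move=> d_fh d_gh; rewrite mulrBl -mulrA -scalerAl -mul_polyC.
by apply: dvdrB; apply: dvdr_mull.
Qed.

Lemma irreducible_primitive f : irreducibler f -> (1 < size f)%N -> primitive f.
Proof.
move=> [f0 _ f_irr] f_gt1 d /dvdr_polyCP[q def_f].
have d0 : d != 0 by rewrite -polyC_eq0; apply: (@mulr_neq0_r _ q); rewrite -def_f.
case: (f_irr q d%:P def_f) => [|]; last by rewrite polyC_unit.
rewrite poly_unitE => /andP[/eqP size_q _].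
by move: f_gt1; rewrite def_f mulrC size_Cmul // size_q.
Qed.

Section PolyMeasure.
Variable mu : R -> nat.
Hypothesis mu_measure : unit_measure mu.

Lemma content_decomposition f : f != 0 ->
  exists c g, [/\ f = c%:P * g, c != 0 & primitive g].
Proof.
have [N] := ubnP (mu (lead_coef f)); elim: N f => // N IH f lt_fN f0.
have [f_prim|] := classic (primitive f); first by exists 1, f; rewrite mul1r oner_neq0.
rewrite /primitive => /not_all_ex_not[d nd].
have [/dvdr_polyCP[q def_f] /negP dU] := imply_to_and _ _ nd.
have q0 : q != 0 by apply: (@mulr_neq0_l _ q d%:P); rewrite -def_f.
have d0 : d != 0 by rewrite -polyC_eq0; apply: (@mulr_neq0_r _ q); rewrite -def_f.
have lt_qN : (mu (lead_coef q) < N)%N.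
  move: lt_fN (measure_gt0 mu_measure d0 dU).
  by rewrite def_f lead_coefM lead_coefC measureM ?lead_coef_eq0 //; lia.
have [c [g [def_q c0 g_prim]]] := IH q lt_qN q0.
by exists (c * d), g; rewrite mulf_neq0 // def_f def_q polyCM mulrAC.
Qed.

Hypothesis irreducible_prime : forall p, irreducibler p -> primer p.

Lemma primitive_dvdr_mulC s a f :
  primitive s -> a != 0 -> dvdr s (a%:P * f) -> dvdr s f.
Proof.
move=> s_prim; have [N] := ubnP (mu a); elim: N a f => // N IH a f lt_aN a0 [q def_af].
have [aU|aU] := boolP (a \is a GRing.unit).
  by exists (a^-1%:P * q); rewrite -mulrA -def_af mulrA -polyCM mulVr // mul1r.
have [p [p0 pU p_irr] [a' def_a]] := dvdr_irreducible mu_measure a0 aU.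
have pC_qs : dvdr p%:P (q * s).
  by exists (a'%:P * f); rewrite -def_af def_a polyCM mulrAC.
have [[q' def_q]|/dvdr_polyCP/s_prim] :=
  primer_polyC (irreducible_prime (And3 p0 pU p_irr)) pC_qs; last by rewrite (negbTE pU).
have a'0 : a' != 0 by apply: (@mulr_neq0_l _ a' p); rewrite -def_a.
have lt_a'N : (mu a' < N)%N.
  by move: lt_aN (measure_gt0 mu_measure p0 pU); rewrite def_a measureM //; lia.
apply: (IH a' f lt_a'N a'0); exists q'; apply: (@mulIf _ p%:P); first by rewrite polyC_eq0.
by rewrite mulrAC -polyCM -def_a def_af def_q mulrAC.
Qed.

Definition poly_measure f := ((size f).-1 + mu (lead_coef f))%N.

Lemma unit_measure_poly : unit_measure poly_measure.
Proof.
split=> [f g f0 g0|f f0].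
  rewrite /poly_measure size_mul // lead_coefM measureM ?lead_coef_eq0 //.
  by move: f0 g0; rewrite -!size_poly_gt0; lia.
rewrite /poly_measure poly_unitE; have [size_f|size_f] := eqVneq (size f) 1%N.
  by rewrite size_f add0n (proj2 mu_measure) ?lead_coef_eq0 // lead_coefE size_f.
by apply/negbTE; move: f0 size_f; rewrite -size_poly_gt0; lia.
Qed.

Lemma irreducible_dvdr_mul f s h : irreducibler f -> (1 < size f)%N ->
  s != 0 -> (size s < size f)%N -> dvdr f (s * h) -> dvdr f h.
Proof.
move=> f_irr f_gt1; have f_prim := irreducible_primitive f_irr f_gt1.
(* Either the pseudo-remainder of f by s is a smaller such s, or the
   primitive part of s divides f, hence is a unit by irreducibility. *)
have [N] := ubnP (size s); elim: N s => // N IH s lt_sN s0 lt_sf f_sh.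
have lt_rs : (size (f %% s)%R < size s)%N by rewrite Pdiv.Idomain.ltn_modp.
have [r0|r0] := eqVneq (f %% s) 0; last first.
  apply: (IH (f %% s)) => //; [exact: leq_trans lt_rs _ | exact: ltn_trans lt_rs _ |].
  exact: dvdr_modp_mul (dvdr_mulr h (dvdrr f)) f_sh.
have [c [s1 [def_s c0 s1_prim]]] := content_decomposition s0.
have [t def_f] : dvdr s1 f.
  apply: (primitive_dvdr_mulC s1_prim (Pdiv.Idomain.lc_expn_scalp_neq0 f s)).
  exists (f %/ s * c%:P).
  by rewrite mul_polyC Pdiv.Idomain.divp_eq r0 addr0 def_s mulrA.
have [f0 _ f_irr'] := f_irr; have [tU|s1U] := f_irr' t s1 def_f.
  move: tU; rewrite poly_unitE => /andP[/eqP size_t _].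
  have s10 : s1 != 0 by apply: (@mulr_neq0_r _ t s1); rewrite -def_f.
  have t0 : t != 0 by rewrite -size_poly_gt0 size_t.
  by move: lt_sf; rewrite [in size f]def_f size_mul // size_t add1n def_s size_Cmul // ltnn.
apply: (primitive_dvdr_mulC f_prim c0).
have -> : c%:P * h = s1^-1 * (s * h) by rewrite def_s [c%:P * s1]mulrC -!mulrA mulKr.
exact: dvdr_mull.
Qed.

Lemma irreducible_prime_poly f : irreducibler f -> primer f.
Proof.
move=> f_irr g h f_gh; have [f_le1|f_gt1] := leqP (size f) 1.
  have def_f := size1_polyC f_le1; rewrite def_f in f_irr f_gh *.
  exact: primer_polyC (irreducible_prime (irreducible_polyC f_irr)) _ _ f_gh.
have [f_g|nf_g] := classic (dvdr f g); [by left | right].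
apply: (irreducible_dvdr_mul (s := g %% f) f_irr f_gt1).
- apply: contra_notN nf_g => /eqP r0.
  apply: (primitive_dvdr_mulC (irreducible_primitive f_irr f_gt1)
    (Pdiv.Idomain.lc_expn_scalp_neq0 g f)).
  by exists (g %/ f); rewrite mul_polyC Pdiv.Idomain.divp_eq r0 addr0.
- by rewrite Pdiv.Idomain.ltn_modp; case: f_irr.
- exact: dvdr_modp_mul f_gh (dvdr_mulr h (dvdrr f)).
Qed.

End PolyMeasure.

Lemma factorial_poly : factorial_domain R -> factorial_domain {poly R}.
Proof.
move=> [mu [mu_measure irr_prime]]; exists (poly_measure mu).
split; first exact: unit_measure_poly.
exact: (irreducible_prime_poly mu_measure irr_prime).
Qed.

End PolyFactorial.

Lemma can2_factorial_domain (R S : idomainType) (f : {rmorphism S -> R}) (g : R -> S) :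
  cancel f g -> cancel g f -> factorial_domain R -> factorial_domain S.
Proof.
move=> fK gK [mu [[muM mu_unit] irr_prime]]; have f_inj := can_inj fK.
have gM x y : g (x * y) = g x * g y by apply: f_inj; rewrite rmorphM !gK.
have f_eq0 x : (f x != 0) = (x != 0) by rewrite -(rmorph0 f) (inj_eq f_inj).
have f_unit x : (f x \is a GRing.unit) = (x \is a GRing.unit).
  apply/idP/idP => [/unitrPr[y fxy]|]; last exact: rmorph_unit.
  by apply/unitrPr; exists (g y); apply: f_inj; rewrite rmorphM gK fxy rmorph1.
exists (mu \o f); split; first split.
- by move=> a b a0 b0 /=; rewrite rmorphM muM // f_eq0.
- by move=> a a0 /=; rewrite mu_unit ?f_eq0 // f_unit.
move=> p [p0 pU p_irr] a b [q def_ab].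
have fp_irr : irreducibler (f p).
  split; rewrite ?f_eq0 ?f_unit // => x y def_fp.
  have := p_irr (g x) (g y); rewrite -gM -def_fp fK -(f_unit (g x)) -(f_unit (g y)) !gK.
  exact.
have : dvdr (f p) (f a * f b) by exists (f q); rewrite -!rmorphM def_ab.
by case/(irr_prime _ fp_irr) => -[r def_r]; [left | right];
  exists (g r); apply: f_inj; rewrite rmorphM gK -def_r.
Qed.

Lemma eq_rmorph_mpoly (R : nzRingType) (n : nat) (A : nzRingType)
  (F G : {rmorphism {mpoly R[n]} -> A}) :
  (forall c, F c%:MP = G c%:MP) -> (forall i, F 'X_i = G 'X_i) -> F =1 G.
Proof.
move=> FGC FGX p; rewrite (mpolyE p) !rmorph_sum; apply: eq_bigr => m _.
rewrite -mul_mpolyC !rmorphM FGC mpolyXE_id !rmorph_prod; congr (_ * _).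
by apply: eq_bigr => i _; rewrite !rmorphXn FGX.
Qed.

Lemma eq_rmorph_poly (R A : nzRingType) (F G : {rmorphism {poly R} -> A}) :
  (forall c, F c%:P = G c%:P) -> F 'X = G 'X -> F =1 G.
Proof.
move=> FGC FGX p; rewrite -(coefK p) poly_def !rmorph_sum; apply: eq_bigr => i _.
by rewrite -mul_polyC !rmorphM FGC !rmorphXn FGX.
Qed.

Section MpolyUnivariate.
Variables (k : fieldType) (n : nat).

Definition mpoly_of_poly : {poly {mpoly k[n]}} -> {mpoly k[n.+1]} :=
  horner_eval 'X_ord_max \o map_poly (@mwiden n k).

Lemma muniX_max : muni ('X_(@ord_max n) : {mpoly k[n.+1]}) = 'X.
Proof.
rewrite /muni mmapX mmap1U; case: splitP => //; case=> j lt_jn /eqP /=.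
by have := lt_jn; rewrite ltn_neqAle eq_sym => /andP[/negbTE->].
Qed.

Lemma muniX_lift (i : 'I_n) :
  muni ('X_(lift ord_max i) : {mpoly k[n.+1]}) = ('X_i)%:P.
Proof.
rewrite /muni mmapX mmap1U; case: splitP => [j def_j|j] /=.
  by congr ('X__)%:P; apply/val_inj => /=; rewrite -def_j /= /bump leqNgt ltn_ord.
rewrite ord1 /= addn0 /bump leqNgt ltn_ord /= => /eqP.
by rewrite add0n => /eqP def_i; move: (ltn_ord i); rewrite def_i ltnn.
Qed.

Lemma muni_mwiden (c : {mpoly k[n]}) : muni (mwiden c) = c%:P.
Proof.
apply: (@eq_rmorph_mpoly k n _ (@muni n k \o @mwiden n k) polyC) => [d|i] /=.
  by rewrite mwidenC muniC.
rewrite mwidenX mnmwiden1 -muniX_lift; congr (muni 'X__).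
by apply/val_inj => /=; rewrite /bump leqNgt ltn_ord.
Qed.

Lemma muniK : cancel (@muni n k) mpoly_of_poly.
Proof.
move=> p; apply: (@eq_rmorph_mpoly k n.+1 _ (mpoly_of_poly \o @muni n k) idfun) => [c|i] /=.
  by rewrite muniC /mpoly_of_poly /= map_polyC /= horner_evalE hornerC mwidenC.
have [j ->|->] := unliftP ord_max i; rewrite ?muniX_lift ?muniX_max /mpoly_of_poly /=.
  rewrite map_polyC /= horner_evalE hornerC mwidenX mnmwiden1; congr 'X__.
  by apply/val_inj => /=; rewrite /bump leqNgt ltn_ord.
by rewrite map_polyX /= horner_evalE hornerX.
Qed.

Lemma mpoly_of_polyK : cancel mpoly_of_poly (@muni n k).
Proof.
move=> p; apply: (@eq_rmorph_poly _ _ (@muni n k \o mpoly_of_poly) idfun) => [c|] /=.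
  by rewrite /mpoly_of_poly /= map_polyC /= horner_evalE hornerC muni_mwiden.
by rewrite /mpoly_of_poly /= map_polyX /= horner_evalE hornerX muniX_max.
Qed.

End MpolyUnivariate.

Lemma factorial_mpoly (k : fieldType) (n : nat) : factorial_domain {mpoly k[n]}.
Proof.
elim: n => [|n IHn]; last first.
  exact: can2_factorial_domain (@muniK k n) (@mpoly_of_polyK k n) (factorial_poly IHn).
have mpoly0_unit (p : {mpoly k[0]}) : p != 0 -> p \is a GRing.unit.
  have -> : p = (p@_0)%:MP.
    by apply/mpolyP => m; rewrite mcoeffC (_ : m = 0%MM) ?eqxx ?mulr1 //; apply/mnmP => -[].
  rewrite mpolyC_eq0 => p0; apply/unitrPr; exists ((p@_0)^-1)%:MP.
  by rewrite -mpolyCM divff.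
exists (fun=> 0%N); split; first by split=> // p /mpoly0_unit ->.
by move=> p [/mpoly0_unit ->].
Qed.

Lemma coprimer_scoprime (k : fieldType) (p q : {mpoly k[3]}) :
  scoprime p q -> coprimer p q.
Proof. by move=> cop_pq d d_p d_q; apply/unitrPr; exact: cop_pq. Qed.

Lemma ord3_ind (P : 'I_3 -> Prop) : P 0 -> P 1 -> P 2 -> forall l, P l.
Proof.
move=> P0 P1 P2 [[|[|[|//]]] lt_l]; [ rewrite (_ : Ordinal lt_l = 0)
  | rewrite (_ : Ordinal lt_l = 1) | rewrite (_ : Ordinal lt_l = 2)]; by [|apply/val_inj].
Qed.

Lemma add_halfZ (k : fieldType) (V : lmodType k) (x : V) :
  (2%:R : k) != 0 -> 2%:R^-1 *: x + 2%:R^-1 *: x = x.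
Proof. by move=> two0; rewrite -scalerDl -mulr2n -[_ *+ 2]mulr_natl mulfV // scale1r. Qed.

Lemma commDl (U : nzRingType) (u v w : U) : comm (u + v) w = comm u w + comm v w.
Proof. by rewrite /comm mulrDl mulrDr opprD addrACA. Qed.

Section CocycleEquations.
Variables (R : idomainType) (u v f1 f2 : 'I_3 -> R).
Hypothesis R_factorial : factorial_domain R.

Lemma coprimer_cross (a b x y : R) :
  coprimer a b -> a != 0 -> x * b = y * a -> exists g, x = g * a /\ y = g * b.
Proof.
move=> cop_ab a0 xb_ya; have [g def_x] : dvdr a x.
  by apply: factorial_coprimer_dvdr_mul R_factorial cop_ab _; exists y.
by exists g; split=> //; apply: (mulIf a0); rewrite -xb_ya def_x mulrAC.
Qed.

Lemma cocycle_solution : v 0 = 0 -> u 0 != 0 -> v 1 != 0 ->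
  coprimer (u 0) (u 1 * v 2 - v 1 * u 2) -> coprimer (v 1) (v 2) ->
  (forall i j : 'I_3, (i < j)%N -> f2 i * v j + f1 i * u j = f2 j * v i + f1 j * u i) ->
  exists g11 g12 g22, forall l,
    f1 l = g11 * u l + g12 * v l /\ f2 l = g12 * u l + g22 * v l.
Proof.
move=> v0 u00 v10 cop_u cop_v cocycle.
have := cocycle 0 1 erefl; have := cocycle 0 2 erefl; have := cocycle 1 2 erefl.
rewrite v0 !mulr0 !add0r => e12 e02 e01.
set M := u 1 * v 2 - v 1 * u 2 in cop_u.
have M_f10 : f1 0 * M = (v 2 * f1 1 - v 1 * f1 2) * u 0.
  by rewrite mulrBl -!mulrA -e01 -e02 /M; ring.
have M_f20 : f2 0 * M = (u 1 * f1 2 - u 2 * f1 1) * u 0.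
  by rewrite mulrBl -!mulrA -e01 -e02 /M; ring.
have [g11 [def_f10 _]] := coprimer_cross cop_u u00 M_f10.
have [g12 [def_f20 _]] := coprimer_cross cop_u u00 M_f20.
have def_f11 : f1 1 = g11 * u 1 + g12 * v 1.
  by apply: (mulIf u00); rewrite -e01 def_f10 def_f20; ring.
have def_f12 : f1 2 = g11 * u 2 + g12 * v 2.
  by apply: (mulIf u00); rewrite -e02 def_f10 def_f20; ring.
have v_f2 : (f2 1 - g12 * u 1) * v 2 = (f2 2 - g12 * u 2) * v 1.
  apply/eqP; rewrite -subr_eq0; apply/eqP.
  transitivity ((f2 1 * v 2 + f1 1 * u 2) - (f2 2 * v 1 + f1 2 * u 1)).
    by rewrite def_f11 def_f12; ring.
  by rewrite e12 subrr.
have [g22 [def_x def_y]] := coprimer_cross cop_v v10 v_f2.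
exists g11, g12, g22; apply: ord3_ind; split=> //.
- by rewrite def_f10 v0 mulr0 addr0.
- by rewrite def_f20 v0 mulr0 addr0.
- by rewrite -def_x addrC subrK.
- by rewrite -def_y addrC subrK.
Qed.

End CocycleEquations.

Section EnvelopingAlgebra.
Variables (k : fieldType) (U : nzRingType) (iota : {rmorphism {mpoly k[3]} -> U}).
Variables (alpha : 'I_3 -> {mpoly k[3]} -> {mpoly k[3]}) (a : 'I_3 -> U).
Hypothesis comm_a_iota : forall i s, comm (a i) (iota s) = iota (alpha i s).

Lemma comm_mulS s t i : comm (iota s * a i) (iota t) = iota (s * alpha i t).
Proof.
have iota_comm : iota t * iota s = iota s * iota t by rewrite -!rmorphM mulrC.
by rewrite /comm mulrA iota_comm -!mulrA -mulrBr -[_ - _]/(comm _ _) comm_a_iota rmorphM.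
Qed.

Lemma comm_mulSS h t i j : comm (iota h * (a i * a j)) (iota t) =
  iota (h * alpha i t) * a j + iota (h * alpha j t) * a i + iota (h * alpha i (alpha j t)).
Proof.
have swap x l s : x * a l * iota s = x * iota s * a l + x * iota (alpha l s).
  by rewrite -mulrA -mulrA -mulrDr -comm_a_iota /comm addrC subrK.
rewrite /comm !mulrA !swap !mulrDl -!rmorphM [t * h]mulrC.
by rewrite addrAC [X in X - _]addrC addrK addrA.
Qed.

Definition first_order (p q r : {mpoly k[3]}) : U := iota p * a 0 + iota q * a 1 + iota r.

Lemma first_orderD p q r p' q' r' :
  first_order p q r + first_order p' q' r' = first_order (p + p') (q + q') (r + r').
Proof. by rewrite /first_order addrACA [X in X + _ = _]addrACA !rmorphD !mulrDl. Qed.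

Lemma d0_quadratic (g11 g12 g22 : {mpoly k[3]}) l : (2%:R : k) != 0 ->
  d0 iota (iota (2%:R^-1 *: g11) * (a 0 * a 0) + iota g12 * (a 1 * a 0)
           + iota (2%:R^-1 *: g22) * (a 1 * a 1)) l
  = first_order (g11 * alpha 0 'X_l + g12 * alpha 1 'X_l)
                (g12 * alpha 0 'X_l + g22 * alpha 1 'X_l)
                (2%:R^-1 *: g11 * alpha 0 (alpha 0 'X_l) + g12 * alpha 1 (alpha 0 'X_l)
                 + 2%:R^-1 *: g22 * alpha 1 (alpha 1 'X_l)).
Proof.
move=> two0; have diag x z : iota x * a 0 + iota x * a 0 + iota z = first_order (x + x) 0 z.
  by rewrite /first_order rmorphD mulrDl rmorph0 mul0r addr0.
have diag' x z : iota x * a 1 + iota x * a 1 + iota z = first_order 0 (x + x) z.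
  by rewrite /first_order rmorphD mulrDl rmorph0 mul0r add0r.
rewrite /d0 !commDl !comm_mulSS diag diag' -[X in _ + X + _]/(first_order _ _ _) !first_orderD.
by rewrite -!scalerAl !add_halfZ // !scalerAl addr0 add0r.
Qed.

Hypothesis iota_inj : injective iota.

Lemma cocycle1_coef (f1 f2 : 'I_3 -> {mpoly k[3]}) :
  cocycle1 iota (fun l => iota (f2 l) * a 1 + iota (f1 l) * a 0) ->
  forall i j : 'I_3, (i < j)%N ->
    f2 i * alpha 1 'X_j + f1 i * alpha 0 'X_j = f2 j * alpha 1 'X_i + f1 j * alpha 0 'X_i.
Proof.
move=> cocycle i j lt_ij; apply: iota_inj; apply/eqP; rewrite -subr_eq0.
by have := cocycle i j lt_ij; rewrite /d1 !commDl !comm_mulS -!rmorphD => ->.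
Qed.

End EnvelopingAlgebra.

Unset Implicit Arguments. Set Strict Implicit.

Theorem lemma4p1
  (k : fieldType) (hchar : [pchar k] =i pred0)
  (alpha : 'I_3 -> {mpoly k[3]} -> {mpoly k[3]})
  (hder : forall i, is_kder (alpha i))
  (htri : forall i j : 'I_3, (j < i)%N -> alpha i 'X_j = 0)
  (hdiag : alpha 0 'X_0 * alpha 1 'X_1 * alpha 2 'X_2 != 0)
  (hbez1 : scoprime (alpha 1 'X_1) (alpha 1 'X_2))
  (hbez2 : scoprime (alpha 0 'X_0)
             (alpha 0 'X_1 * alpha 1 'X_2 - alpha 1 'X_1 * alpha 0 'X_2))
  (U : nzRingType) (iota : {rmorphism {mpoly k[3]} -> U})
  (hiota : injective iota) (a : 'I_3 -> U)
  (hcommS : forall (i : 'I_3) s, comm (a i) (iota s) = iota (alpha i s))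
  (hbracket : forall i j : 'I_3, exists c : 'I_3 -> {mpoly k[3]},
      (forall s, alpha i (alpha j s) - alpha j (alpha i s)
                 = \sum_(m < 3) c m * alpha m s)
      /\ comm (a i) (a j) = \sum_(m < 3) iota (c m) * a m)
  (f1 f2 : 'I_3 -> {mpoly k[3]}) :
  let omega := fun l : 'I_3 => iota (f2 l) * a 1 + iota (f1 l) * a 0 in
  cocycle1 iota omega ->
  exists g11 g12 g22 : {mpoly k[3]},
    [/\ g11 * alpha 0 'X_0 = f1 0,
        g12 * alpha 0 'X_0 = f2 0,
        g22 * alpha 1 'X_1 = f2 1 - g12 * alpha 0 'X_1,
        (forall h11 h12 h22 : {mpoly k[3]},
           h11 * alpha 0 'X_0 = f1 0 ->
           h12 * alpha 0 'X_0 = f2 0 ->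
           h22 * alpha 1 'X_1 = f2 1 - h12 * alpha 0 'X_1 ->
           [/\ h11 = g11, h12 = g12 & h22 = g22])
      & inF0 iota (fun l => omega l
           - d0 iota (iota ((2%:R : k)^-1 *: g11) * (a 0 * a 0)
                      + iota g12 * (a 1 * a 0)
                      + iota ((2%:R : k)^-1 *: g22) * (a 1 * a 1)) l)].
Proof.
move=> omega cocycle.
have two0 : (2%:R : k) != 0 by rewrite ((pcharf0P k).1 hchar 2).
have [[alpha00_neq0 alpha11_neq0] _] :
    (alpha 0 'X_0 != 0 /\ alpha 1 'X_1 != 0) /\ alpha 2 'X_2 != 0.
  by move: hdiag; rewrite !mulf_eq0 !negb_or => /andP[/andP[-> ->] ->].
have alpha10 : alpha 1 'X_0 = 0 by apply: htri.
have [g11 [g12 [g22 coefE]]] := cocycle_solution (u := fun l => alpha 0 'X_l)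
  (v := fun l => alpha 1 'X_l) (factorial_mpoly k 3) alpha10 alpha00_neq0 alpha11_neq0
  (coprimer_scoprime hbez2) (coprimer_scoprime hbez1) (cocycle1_coef hcommS hiota cocycle).
have [def_f10 def_f20] := coefE 0; have [_ def_f21] := coefE 1.
rewrite /= alpha10 !mulr0 !addr0 in def_f10 def_f20 def_f21.
exists g11, g12, g22; split.
- by rewrite def_f10.
- by rewrite def_f20.
- by rewrite def_f21 addrC addKr.
- move=> h11 h12 h22 h11E h12E h22E.
  have h12_g12 : h12 = g12 by apply: (mulIf alpha00_neq0); rewrite h12E def_f20.
  split=> //; first by apply: (mulIf alpha00_neq0); rewrite h11E def_f10.
  by apply: (mulIf alpha11_neq0); rewrite h22E h12_g12 def_f21 addrC addKr.
move=> l; have [f1E f2E] := coefE l; eexists.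
rewrite (d0_quadratic hcommS) // -f1E -f2E /omega /first_order.
by rewrite [X in X - _]addrC opprD addrA subrr add0r -rmorphN.
Qed.
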